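(* For every $(a,b)\in\mathbb{Z}^2$, $\mu_1E_{(a,b)}-E_{\psi(a,b)}\in q^{-\frac12}\mathcal{A}_+$, where $\psi(a,b)=(-a-[-b]_+,\,b)$.
   Context: Let $\mathcal{T}$ be the quantum torus over $\mathbb{Z}[q^{\pm\frac12}]$ generated by $X_1^{\pm1},X_2^{\pm1}$ with $X_1X_2=qX_2X_1$, with skew field of fractions $\mathcal{F}$. Define $X_k\in\mathcal{F}$ ($k\in\mathbb{Z}$) by $X_{k-1}X_{k+1}=q^{\frac12}X_k+1$ for $k$ odd and $X_{k-1}X_{k+1}=q^2X_k^4+1$ for $k$ even; $\mathcal{A}_q(1,4)$ is the $\mathbb{Z}[q^{\pm\frac12}]$-subalgebra of $\mathcal{F}$ generated by all $X_k$. For $x\in\mathbb{Z}$, $[x]_+=\max(x,0)$. Standard monomials: $E_{(a,b)}=q^{-\frac12ab}X_3^{[-a]_+}X_1^{[a]_+}X_2^{[b]_+}X_0^{[-b]_+}$; $\mathcal{A}_+=\bigoplus_{(a,b)\in\mathbb{Z}^2}\mathbb{Z}[q^{-\frac12}]E_{(a,b)}$. Also $\mu_1E_{(a,b)}=q^{-\frac12ab}X_4^{[-b]_+}X_2^{[b]_+}X_3^{[a]_+}X_1^{[-a]_+}$. *)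

From mathcomp Require Import all_boot all_algebra.
Set Implicit Arguments. Unset Strict Implicit. Unset Printing Implicit Defensive.
Import GRing.Theory.
Local Open Scope ring_scope.

Definition pospart (x : int) : nat :=
  match x with Posz n => n | Negz _ => 0%N end.

(* t plays the role of q^{1/2}; so q = t^2, q^2 = t^4.
   Right-hand side of the exchange relation X_{k-1} X_{k+1} = exch t k X_k:
   q^{1/2} X_k + 1 for k odd, q^2 X_k^4 + 1 for k even. *)
Definition exch (D : unitRingType) (t : D) (k : int) (x : D) : D :=
  if odd (absz k) then t * x + 1 else t ^+ 4 * x ^+ 4 + 1.

(* The subring of D generated by t^{±1}, x1^{±1}, x2^{±1} is a copy of the
   quantum torus T over Z[q^{±1/2}]: the monomials t^k x1^a x2^b are
   Z-linearly independent. *)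
Definition torus_faithful (D : unitRingType) (t x1 x2 : D) : Prop :=
  forall (s : seq (int * int * int)) (n : int * int * int -> int),
    uniq s ->
    \sum_(m <- s) ((n m)%:~R * t ^ m.1.1 * x1 ^ m.1.2 * x2 ^ m.2) = 0 ->
    forall m, m \in s -> n m = 0.

Definition Emon (D : unitRingType) (t : D) (X : int -> D) (v : int * int) : D :=
  let: (a, b) := v in
  t ^ (- (a * b)) * X 3 ^+ pospart (- a) * X 1 ^+ pospart a
    * X 2 ^+ pospart b * X 0 ^+ pospart (- b).

Definition mu1E (D : unitRingType) (t : D) (X : int -> D) (v : int * int) : D :=
  let: (a, b) := v in
  t ^ (- (a * b)) * X 4 ^+ pospart (- b) * X 2 ^+ pospart b
    * X 3 ^+ pospart a * X 1 ^+ pospart (- a).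

Definition psi (v : int * int) : int * int :=
  (- v.1 - (pospart (- v.2))%:Z, v.2).

(* Write t for q^(1/2) and say that x has leading term t^e E_v when
   x - t^e E_v is a Z-combination of monomials t^e' E_w with e' < e and w
   bounded below componentwise by a fixed corner.  The exchange relations give
   X_4 = t^-1 X_3 X_0 - t^-4 X_2^3, and show that E_(a,b) X_0 and E_(a,b) X_1
   have leading terms t^-a E_(a,b-1) and t^-b E_(a+1,b).  By strong induction
   on c (through the formula for X_4), X_3^a X_4^c has leading term
   t^(ac) E_(-a-c,-c); then by induction on r, X_4^c X_1^r has leading term
   t^(rc) E_(r-c,-c).  For b < 0, mu_1 E_(a,b) is a power of t times one of
   these products, with leading term exactly E_psi(a,b); for b >= 0 the
   q-commutations of X_2 with X_1 and X_3 give mu_1 E_(a,b) = E_psi(a,b). *)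

From mathcomp Require Import all_boot all_order all_algebra zify.
Import Order.TTheory GRing.Theory Num.Theory.
Set Implicit Arguments. Unset Strict Implicit. Unset Printing Implicit Defensive.
Local Open Scope ring_scope.

Lemma pospart_nat (n : nat) : pospart n%:Z = n.
Proof. by []. Qed.

Lemma pospartN_nat (n : nat) : pospart (- n%:Z) = 0%N.
Proof. by case: n. Qed.

Lemma pospart_subN (b : int) : (pospart b)%:Z - (pospart (- b))%:Z = b.
Proof. by case: b => n; rewrite ?NegzE ?opprK pospartN_nat ?subr0 ?sub0r. Qed.

Lemma pospart_cases (x : int) :
  ((pospart x)%:Z = x /\ 0 <= x) \/ (pospart x = 0%N /\ x < 0).
Proof. by case: x => n; [left | right]. Qed.

Section ExchangeRelations.

Variables (D : unitRingType) (t : D) (X : int -> D).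
Hypothesis t_unit : t \is a GRing.unit.
Hypothesis t_central : forall x, t * x = x * t.
Hypothesis X1_unit : X 1 \is a GRing.unit.
Hypothesis X2_unit : X 2 \is a GRing.unit.
Hypothesis X1X2 : X 1 * X 2 = t ^+ 2 * (X 2 * X 1).
Hypothesis exch1 : X 0 * X 2 = t * X 1 + 1.
Hypothesis exch2 : X 1 * X 3 = t ^+ 4 * X 2 ^+ 4 + 1.
Hypothesis exch3 : X 2 * X 4 = t * X 3 + 1.

Lemma tzC z x : t ^ z * x = x * t ^ z.
Proof.
have cxt : GRing.comm x t by rewrite /GRing.comm t_central.
exact/esym/commrXz.
Qed.

Lemma tzCA x z y : x * (t ^ z * y) = t ^ z * (x * y).
Proof. by rewrite mulrA -tzC mulrA. Qed.

Lemma tzMA z w x : t ^ z * (t ^ w * x) = t ^ (z + w) * x.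
Proof. by rewrite mulrA -exprzDr. Qed.

Definition qcomm (z : int) (x y : D) := x * y = t ^ z * (y * x).

Lemma qcommN z x y : qcomm z x y -> qcomm (- z) y x.
Proof. by rewrite /qcomm => ->; rewrite tzMA addNr mul1r. Qed.

Lemma qcommXl z x y (n : nat) : qcomm z x y -> qcomm (z * n%:Z) (x ^+ n) y.
Proof.
rewrite /qcomm => xy; elim: n => [|n IH]; first by rewrite mulr0 expr0z !expr0 !mul1r mulr1.
rewrite exprS -mulrA IH tzCA [x * (y * _)]mulrA xy -mulrA tzMA -mulrA.
by congr (t ^ _ * _); lia.
Qed.

Lemma qcommXr z x y (n : nat) : qcomm z x y -> qcomm (z * n%:Z) x (y ^+ n).
Proof. by move=> /qcommN /(qcommXl n) /qcommN; rewrite mulNr opprK. Qed.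

Lemma comm_exch_poly c (n : nat) y :
  y * (t ^ c * y ^+ n + 1) = (t ^ c * y ^+ n + 1) * y.
Proof. by rewrite mulrDr mulrDl mulr1 mul1r tzCA -mulrA -exprS exprSr. Qed.

Lemma qcomm_exchl z c (n : nat) x y w : x \is a GRing.unit ->
  qcomm z x y -> x * w = t ^ c * y ^+ n + 1 -> qcomm z y w.
Proof.
move=> xU xy xw; apply: (mulrI xU).
by rewrite mulrA xy -!mulrA xw tzCA [x * (w * y)]mulrA xw comm_exch_poly.
Qed.

Lemma qcomm_exchr z c (n : nat) x y w : x \is a GRing.unit ->
  qcomm z y x -> w * x = t ^ c * y ^+ n + 1 -> qcomm z w y.
Proof.
move=> xU yx wx; apply: (mulIr xU).
by rewrite -mulrA yx tzCA [w * (x * y)]mulrA wx -!mulrA wx comm_exch_poly.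
Qed.

Lemma exch_revl z c (n : nat) x y w : x \is a GRing.unit ->
  qcomm z y x -> x * w = t ^ c * y ^+ n + 1 -> w * x = t ^ (c + z * n%:Z) * y ^+ n + 1.
Proof.
move=> xU yx xw; apply: (mulrI xU).
by rewrite mulrA xw mulrDl mulrDr -mulrA (qcommXl n yx) tzMA tzCA !mul1r mulr1.
Qed.

Lemma exch_revr z c (n : nat) x y w : x \is a GRing.unit ->
  qcomm z x y -> w * x = t ^ c * y ^+ n + 1 -> x * w = t ^ (c + z * n%:Z) * y ^+ n + 1.
Proof.
move=> xU xy wx; apply: (mulIr xU).
by rewrite -mulrA wx mulrDl mulrDr tzCA (qcommXr n xy) tzMA -mulrA !mul1r mulr1.
Qed.

Lemma qcomm12 : qcomm 2 (X 1) (X 2).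
Proof. exact: X1X2. Qed.

Lemma qcomm23 : qcomm 2 (X 2) (X 3).
Proof. exact: (qcomm_exchl (c := 4) (n := 4) X1_unit qcomm12 exch2). Qed.

Lemma qcomm34 : qcomm 2 (X 3) (X 4).
Proof. exact: (qcomm_exchl (c := 1) (n := 1) X2_unit qcomm23 exch3). Qed.

Lemma qcomm01 : qcomm 2 (X 0) (X 1).
Proof. exact: (qcomm_exchr (c := 1) (n := 1) X2_unit qcomm12 exch1). Qed.

Lemma exch1r : X 2 * X 0 = t ^ (-1) * X 1 + 1.
Proof. exact: (exch_revr (c := 1) (n := 1) X2_unit (qcommN qcomm12) exch1). Qed.

Lemma exch2r : X 3 * X 1 = t ^ (-4) * X 2 ^+ 4 + 1.
Proof. exact: (exch_revl (c := 4) (n := 4) X1_unit (qcommN qcomm12) exch2). Qed.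

Lemma exch3r : X 4 * X 2 = t ^ (-1) * X 3 + 1.
Proof. exact: (exch_revl (c := 1) (n := 1) X2_unit (qcommN qcomm23) exch3). Qed.

Lemma X4E : X 4 = t ^ (-1) * (X 3 * X 0) - t ^ (-4) * X 2 ^+ 3.
Proof.
apply: (mulrI X2_unit); rewrite exch3 mulrBr !tzCA [X 2 * (X 3 * X 0)]mulrA qcomm23.
rewrite -mulrA -[X 3 * X 2 * X 0]mulrA exch1r mulrDr mulr1 [X 3 * _]tzCA exch2r -exprS.
rewrite !mulrDr !tzMA mulr1 (_ : -1 + 2 - 1 - 4 = -4) // (_ : -1 + 2 - 1 = 0) //.
rewrite (_ : -1 + 2 = 1) //.
by rewrite expr0z expr1z -[in RHS]addrA [RHS]addrC addrA addrNK.
Qed.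

Lemma exch_pow z c (n : nat) w x y : qcomm z w y -> w * x = t ^ c * y + 1 ->
  w ^+ n.+1 * x = w ^+ n + t ^ (c + z * n%:Z) * (y * w ^+ n).
Proof.
move=> wy wx; rewrite exprSr -mulrA wx mulrDr mulr1 addrC tzCA.
by rewrite (qcommXl n wy) tzMA.
Qed.

Lemma X2X0_pow (k : nat) :
  X 2 ^+ k.+1 * X 0 = X 2 ^+ k + t ^ (-1 + -2 * k%:Z) * (X 1 * X 2 ^+ k).
Proof. exact: exch_pow (qcommN qcomm12) exch1r. Qed.

Lemma X4X2_pow (n : nat) :
  X 4 ^+ n.+1 * X 2 = X 4 ^+ n + t ^ (-1 + -2 * n%:Z) * (X 3 * X 4 ^+ n).
Proof. exact: exch_pow (qcommN qcomm34) exch3r. Qed.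

Lemma X4_powS (c : nat) : X 4 ^+ c.+1 =
  t ^ (-1 + -2 * c%:Z) * (X 3 * X 4 ^+ c * X 0) - t ^ (-4) * (X 4 ^+ c * X 2 ^+ 3).
Proof.
rewrite exprSr {2}X4E mulrBr !tzCA [X 4 ^+ c * (X 3 * X 0)]mulrA.
by rewrite (qcommXl c (qcommN qcomm34)) -[t ^ _ * _ * X 0]mulrA tzMA.
Qed.

Implicit Types (c v : int * int) (e K : int).

(* tspan c K is the part of q^(K/2) A_+ spanned by the E_v with v >= c
   componentwise; each w = (v, e, n) of the witness contributes n t^e E_v. *)
Definition tspan c K (x : D) : Prop :=
  exists s : seq (int * int * int * int),
    all (fun w : int * int * int * int =>
           [&& c.1 <= w.1.1.1, c.2 <= w.1.1.2 & w.1.2 <= K]) s /\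
    x = \sum_(w <- s) (t ^ w.1.2 * Emon t X w.1.1) *~ w.2.

Lemma tspan0 c K : tspan c K 0.
Proof. by exists [::]; rewrite big_nil. Qed.

Lemma tspanD c K x y : tspan c K x -> tspan c K y -> tspan c K (x + y).
Proof.
move=> [s1 [s1c ->]] [s2 [s2c ->]]; exists (s1 ++ s2).
by rewrite all_cat s1c s2c big_cat.
Qed.

Lemma tspanMz c K x n : tspan c K x -> tspan c K (x *~ n).
Proof.
move=> [s [sc ->]]; exists [seq (w.1, w.2 * n) | w <- s]; rewrite all_map.
split; first exact: sub_all sc.
by rewrite big_map mulrz_suml; apply: eq_bigr => w _; rewrite mulrzA.
Qed.

Lemma tspanN c K x : tspan c K x -> tspan c K (- x).
Proof. by rewrite -mulrN1z; apply: tspanMz. Qed.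

Lemma tspanW c c' K K' x : tspan c K x ->
  c'.1 <= c.1 -> c'.2 <= c.2 -> K <= K' -> tspan c' K' x.
Proof.
move=> [s [sc ->]] c1 c2 KK; exists s; split => //.
apply: sub_all sc => w /and3P[w1 w2 wK]; apply/and3P; split; lia.
Qed.

Lemma tspan_monomial c K e v :
  c.1 <= v.1 -> c.2 <= v.2 -> e <= K -> tspan c K (t ^ e * Emon t X v).
Proof.
by move=> v1 v2 eK; exists [:: (v, e, 1)]; rewrite big_seq1 /= v1 v2 eK.
Qed.

Lemma tspanMtz z c K x : tspan c K x -> tspan c (z + K) (t ^ z * x).
Proof.
move=> [s [sc ->]]; exists [seq (w.1.1, z + w.1.2, w.2) | w <- s]; rewrite all_map.
split; first by apply: sub_all sc => w /and3P[w1 w2 wK] /=; rewrite w1 w2 lerD2l.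
by rewrite big_map mulr_sumr; apply: eq_bigr => w _; rewrite mulrzAr mulrA exprzDr.
Qed.

Lemma tspan_bind c c' K K' x y : tspan c K x ->
  (forall v e, c.1 <= v.1 -> c.2 <= v.2 -> e <= K ->
     tspan c' K' (t ^ e * Emon t X v * y)) ->
  tspan c' K' (x * y).
Proof.
move=> [s [sc ->]] vy; elim: s sc => [|w s IH].
  by rewrite big_nil mul0r => _; apply: tspan0.
rewrite /= big_cons mulrDl => /andP[/and3P[w1 w2 wK] sc].
by apply: tspanD (IH sc); rewrite mulrzAl; apply/tspanMz/vy.
Qed.

Definition leading c e v (x : D) : Prop :=
  tspan c (e - 1) (x - t ^ e * Emon t X v).

Lemma leading_eq c e v x : x = t ^ e * Emon t X v -> leading c e v x.
Proof. by move->; rewrite /leading subrr; apply: tspan0. Qed.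

Lemma leadingD c e v x y :
  leading c e v x -> tspan c (e - 1) y -> leading c e v (x + y).
Proof. by move=> xl ys; rewrite /leading addrAC; apply: tspanD. Qed.

Lemma leadingW c c' e v x : leading c e v x ->
  c'.1 <= c.1 -> c'.2 <= c.2 -> leading c' e v x.
Proof. by move=> xl c1 c2; apply: tspanW xl c1 c2 _. Qed.

Lemma leadingMtz z c e e' v x :
  z + e = e' -> leading c e v x -> leading c e' v (t ^ z * x).
Proof.
move=> <- xl; rewrite /leading -tzMA -mulrBr.
by apply: tspanW (tspanMtz z xl) _ _ _ => //; lia.
Qed.

Lemma leading_tspan c e v x : leading c e v x ->
  c.1 <= v.1 -> c.2 <= v.2 -> tspan c e x.
Proof.
move=> xl v1 v2; rewrite -(subrK (t ^ e * Emon t X v) x).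
apply: tspanD; first by apply: tspanW xl _ _ _ => //; lia.
exact: tspan_monomial.
Qed.

Definition X31 (a : int) := X 3 ^+ pospart (- a) * X 1 ^+ pospart a.

Lemma X31_Emon (a b : int) :
  X31 a * X 2 ^+ pospart b * X 0 ^+ pospart (- b) = t ^ (a * b) * Emon t X (a, b).
Proof. by rewrite /Emon /X31 !mulrA -exprzDr // addrN expr0z mul1r. Qed.

Lemma X31_X1 a (k u : nat) :
  X31 a * X 1 * X 2 ^+ k * X 0 ^+ u = X31 (a + 1) * X 2 ^+ k * X 0 ^+ u
    + (if a < 0 then t ^ (-4) * (X31 (a + 1) * X 2 ^+ (k + 4) * X 0 ^+ u) else 0).
Proof.
case: a => n.
  have -> : n%:Z + 1 = n.+1%:Z by lia.
  by rewrite /X31 !pospartN_nat !pospart_nat -[X 3 ^+ 0 * _ * X 1]mulrA -exprSr addr0.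
have -> : Negz n + 1 = - n%:Z by rewrite NegzE; lia.
have -> : (Negz n < 0) = true by [].
rewrite /X31 NegzE !opprK !pospartN_nat !expr0 !mulr1 !pospart_nat.
rewrite exprSr -[X 3 ^+ n * X 3 * X 1]mulrA exch2r mulrDr mulr1 !mulrDl addrC tzCA.
by rewrite addnC exprD !mulrA.
Qed.

Lemma leading_X31X2X0 (u : nat) (a : int) (k : nat) :
  leading (a, k%:Z - u%:Z) (a * (k%:Z - u%:Z)) (a, k%:Z - u%:Z)
    (X31 a * X 2 ^+ k * X 0 ^+ u).
Proof.
elim: u a k => [|u IH] a k.
  by apply: leading_eq; rewrite subr0 -X31_Emon pospartN_nat.
case: k => [|k].
  by apply: leading_eq; rewrite sub0r -X31_Emon opprK pospartN_nat.
have -> : k.+1%:Z - u.+1%:Z = k%:Z - u%:Z by lia.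
have X31_tspan j : tspan (a + 1, j%:Z - u%:Z) ((a + 1) * (j%:Z - u%:Z))
    (X31 (a + 1) * X 2 ^+ j * X 0 ^+ u).
  exact: leading_tspan (IH _ _) _ _.
have -> : X31 a * X 2 ^+ k.+1 * X 0 ^+ u.+1 = X31 a * X 2 ^+ k * X 0 ^+ u
    + t ^ (-1 + -2 * k%:Z) * (X31 a * X 1 * X 2 ^+ k * X 0 ^+ u).
  rewrite [X 0 ^+ _]exprS mulrA -[X31 a * _ * X 0]mulrA X2X0_pow.
  by rewrite mulrDr mulrDl tzCA !mulrA.
apply: leadingD; first exact: IH.
rewrite X31_X1 [t ^ (-1 + _) * _]mulrDr; apply: tspanD.
  by apply: tspanW (tspanMtz _ (X31_tspan _)) _ _ _ => /=; nia.
case: ifP => a0; last by rewrite mulr0; apply: tspan0.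
by rewrite tzMA; apply: tspanW (tspanMtz _ (X31_tspan _)) _ _ _ => /=; nia.
Qed.

Lemma leading_EmonX0 (a b : int) :
  leading (a, b - 1) (- a) (a, b - 1) (Emon t X (a, b) * X 0).
Proof.
have -> : Emon t X (a, b) * X 0 =
    t ^ (- (a * b)) * (X31 a * X 2 ^+ pospart b * X 0 ^+ (pospart (- b)).+1).
  by rewrite /Emon /X31 exprSr !mulrA.
have sub_b : (pospart b)%:Z - (pospart (- b)).+1%:Z = b - 1.
  by rewrite -addn1 PoszD opprD addrA pospart_subN.
by rewrite -sub_b; apply: leadingMtz (leading_X31X2X0 _ _ _); rewrite sub_b; nia.
Qed.

Lemma leading_EmonX1 (a b : int) :
  leading (a + 1, b) (- b) (a + 1, b) (Emon t X (a, b) * X 1).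
Proof.
have -> : Emon t X (a, b) * X 1 =
    t ^ (- (a * b) - 2 * b) * (X31 a * X 1 * X 2 ^+ pospart b * X 0 ^+ pospart (- b)).
  rewrite /Emon /X31 -mulrA (qcommXl _ qcomm01) tzCA -mulrA [X 2 ^+ _ * (X 1 * _)]mulrA.
  rewrite (qcommXl _ (qcommN qcomm12)) -[_ * X 0 ^+ _]mulrA tzCA tzMA !mulrA -exprzDr //.
  by congr (t ^ _ * _ * _ * _ * _ * _); move: (pospart_subN b); lia.
have sub_b := pospart_subN b.
rewrite X31_X1 mulrDr; apply: leadingD.
  by apply: leading_eq; rewrite X31_Emon tzMA; congr (t ^ _ * _); nia.
case: ifP => a0; last by rewrite mulr0; apply: tspan0.
rewrite tzMA; apply: tspanW (tspanMtz _ (leading_tspan (leading_X31X2X0 _ _ _) _ _)) _ _ _.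
all: rewrite /=; nia.
Qed.

Lemma tspan_mulX0 c K x :
  tspan c K x -> tspan (c.1, c.2 - 1) (K - c.1) (x * X 0).
Proof.
move=> xs; apply: (tspan_bind xs) => -[a b] e /= ca cb eK; rewrite -mulrA.
have := tspanMtz e (leading_tspan (leading_EmonX0 a b) (lexx _) (lexx _)).
by move/tspanW; apply => /=; lia.
Qed.

Lemma tspan_mulX1 c K x :
  tspan c K x -> tspan (c.1 + 1, c.2) (K - c.2) (x * X 1).
Proof.
move=> xs; apply: (tspan_bind xs) => -[a b] e /= ca cb eK; rewrite -mulrA.
have := tspanMtz e (leading_tspan (leading_EmonX1 a b) (lexx _) (lexx _)).
by move/tspanW; apply => /=; lia.
Qed.

(* Right multiplication by X 0 lowers the exponent of t^e' E_w by w.1, so the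
   lower terms stay below the new leading term because the corner and v share
   their first coordinate; dually for X 1 and the second coordinate. *)
Lemma leading_mulX0 (a b c2 e : int) x : c2 <= b ->
  leading (a, c2) e (a, b) x -> leading (a, c2 - 1) (e - a) (a, b - 1) (x * X 0).
Proof.
move=> c2b xl.
have -> : x * X 0 = t ^ e * (Emon t X (a, b) * X 0) + (x - t ^ e * Emon t X (a, b)) * X 0.
  by rewrite mulrBl mulrA addrC subrK.
apply: leadingD.
  by apply: leadingW (leadingMtz (erefl _) (leading_EmonX0 a b)) _ _ => /=; lia.
by apply: tspanW (tspan_mulX0 xl) _ _ _ => /=; lia.
Qed.

Lemma leading_mulX1 (a b c1 e : int) x : c1 <= a ->
  leading (c1, b) e (a, b) x -> leading (c1 + 1, b) (e - b) (a + 1, b) (x * X 1).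
Proof.
move=> c1a xl.
have -> : x * X 1 = t ^ e * (Emon t X (a, b) * X 1) + (x - t ^ e * Emon t X (a, b)) * X 1.
  by rewrite mulrBl mulrA addrC subrK.
apply: leadingD.
  by apply: leadingW (leadingMtz (erefl _) (leading_EmonX1 a b)) _ _ => /=; lia.
by apply: tspanW (tspan_mulX1 xl) _ _ _ => /=; lia.
Qed.

Lemma leading_X3X4X2 (N : nat) :
  (forall n a : nat, (n <= N)%N ->
     leading (- a%:Z - n%:Z, - n%:Z) (a%:Z * n%:Z) (- a%:Z - n%:Z, - n%:Z)
       (X 3 ^+ a * X 4 ^+ n)) ->
  forall k a n : nat, (n <= N)%N ->
  leading (- a%:Z - n%:Z, - n%:Z) (a%:Z * (n%:Z - k%:Z))
    (- a%:Z - (pospart (n%:Z - k%:Z))%:Z, k%:Z - n%:Z)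
    (X 3 ^+ a * X 4 ^+ n * X 2 ^+ k).
Proof.
move=> X3X4 k; elim: k => [|k IH] a n nN.
  by rewrite expr0 mulr1 subr0 sub0r pospart_nat; apply: X3X4.
case: n nN => [|n] nN.
  apply: leading_eq; rewrite expr0 mulr1 sub0r !subr0.
  have -> : a%:Z * - k.+1%:Z = - a%:Z * k.+1%:Z by lia.
  by rewrite -X31_Emon /X31 opprK !pospartN_nat !pospart_nat !expr0 !mulr1.
have -> : X 3 ^+ a * X 4 ^+ n.+1 * X 2 ^+ k.+1 =
    X 3 ^+ a * X 4 ^+ n * X 2 ^+ k
    + t ^ (-1 + -2 * n%:Z) * (X 3 ^+ a.+1 * X 4 ^+ n * X 2 ^+ k).
  rewrite [X 2 ^+ _]exprS mulrA -[X 3 ^+ a * _ * X 2]mulrA X4X2_pow.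
  by rewrite mulrDr mulrDl tzCA exprSr !mulrA.
have -> : n.+1%:Z - k.+1%:Z = n%:Z - k%:Z by lia.
have -> : k.+1%:Z - n.+1%:Z = k%:Z - n%:Z by lia.
have nk := pospart_cases (n%:Z - k%:Z).
apply: leadingD; first by apply: leadingW (IH a n (ltnW nN)) _ _ => /=; lia.
apply: tspanW (tspanMtz _ (leading_tspan (IH a.+1 n (ltnW nN)) _ _)) _ _ _ => /=; nia.
Qed.

Lemma leading_X3X4 (c a : nat) :
  leading (- a%:Z - c%:Z, - c%:Z) (a%:Z * c%:Z) (- a%:Z - c%:Z, - c%:Z)
    (X 3 ^+ a * X 4 ^+ c).
Proof.
elim/ltn_ind: c a => -[_ a|c IH a].
  apply: leading_eq; rewrite /Emon !subr0 !mulr0 !oppr0 opprK !pospartN_nat.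
  by rewrite !expr0 !mulr1 !expr0z !mul1r.
have -> : X 3 ^+ a * X 4 ^+ c.+1 =
    t ^ (-1 + -2 * c%:Z) * (X 3 ^+ a.+1 * X 4 ^+ c * X 0)
    - t ^ (-4) * (X 3 ^+ a * X 4 ^+ c * X 2 ^+ 3).
  by rewrite X4_powS mulrBr !tzCA [X 3 ^+ a.+1]exprSr !mulrA.
have -> : (- a%:Z - c.+1%:Z, - c.+1%:Z) = (- a.+1%:Z - c%:Z, - c%:Z - 1).
  by congr (_, _); lia.
apply: leadingD.
  by apply: leadingMtz (leading_mulX0 (lexx _) (IH c (ltnSn c) a.+1)); lia.
have := leading_X3X4X2 (fun n a nc => IH n nc a) 3 a (leqnn c).
have c3 := pospart_cases (c%:Z - 3%:Z).
move/leading_tspan => X3X4X2.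
by apply/tspanN/(tspanW (tspanMtz (-4) (X3X4X2 _ _))) => /=; nia.
Qed.

Lemma leading_X4X1 (c r : nat) :
  leading (r%:Z - c%:Z, - c%:Z) (r%:Z * c%:Z) (r%:Z - c%:Z, - c%:Z)
    (X 4 ^+ c * X 1 ^+ r).
Proof.
elim: r => [|r IH].
  by move: (leading_X3X4 c 0); rewrite expr0 mul1r mulr1 !mul0r !sub0r.
have -> : r.+1%:Z - c%:Z = r%:Z - c%:Z + 1 by lia.
have -> : r.+1%:Z * c%:Z = r%:Z * c%:Z - - c%:Z by lia.
by rewrite exprSr mulrA; apply: leading_mulX1 (lexx _) IH.
Qed.

Lemma mu1E_psi_ge0 (a : int) (k : nat) :
  mu1E t X (a, k%:Z) = Emon t X (psi (a, k%:Z)).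
Proof.
rewrite /mu1E /Emon /psi /= !pospartN_nat subr0 !expr0 !mulr1.
case: a => m; rewrite ?NegzE !opprK !pospartN_nat !pospart_nat !expr0 !mulr1 -mulrA.
  by rewrite (qcommXl k (qcommXr m qcomm23)) tzMA mulrA; congr (t ^ _ * _ * _); lia.
have X2X1 := qcommXl k (qcommXr m.+1 (qcommN qcomm12)).
by rewrite X2X1 tzMA mulrA; congr (t ^ _ * _ * _); lia.
Qed.

Lemma leading_mu1E (a b : int) :
  exists c, leading c 0 (psi (a, b)) (mu1E t X (a, b)).
Proof.
case: b => [k|n].
  by exists (0, 0); apply: leading_eq; rewrite expr0z mul1r mu1E_psi_ge0.
rewrite NegzE; case: a => m; rewrite ?NegzE.
  exists (- m%:Z - n.+1%:Z, - n.+1%:Z).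
  have -> : psi (m%:Z, - n.+1%:Z) = (- m%:Z - n.+1%:Z, - n.+1%:Z) by rewrite /psi /=.
  have -> : mu1E t X (m%:Z, - n.+1%:Z) =
      t ^ (- (m%:Z * n.+1%:Z)) * (X 3 ^+ m * X 4 ^+ n.+1).
    have X4X3 := qcommXl n.+1 (qcommXr m (qcommN qcomm34)).
    rewrite /mu1E opprK !pospartN_nat !pospart_nat !expr0 !mulr1 -mulrA X4X3 tzMA.
    by congr (t ^ _ * _); lia.
  by apply: leadingMtz (leading_X3X4 _ _); lia.
exists (m.+1%:Z - n.+1%:Z, - n.+1%:Z).
have -> : psi (- m.+1%:Z, - n.+1%:Z) = (m.+1%:Z - n.+1%:Z, - n.+1%:Z).
  by rewrite /psi /= !opprK.
have -> : mu1E t X (- m.+1%:Z, - n.+1%:Z) =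
    t ^ (- (m.+1%:Z * n.+1%:Z)) * (X 4 ^+ n.+1 * X 1 ^+ m.+1).
  by rewrite /mu1E !opprK !pospartN_nat !pospart_nat !expr0 !mulr1 -mulrA mulrNN.
by apply: leadingMtz (leading_X4X1 _ _); lia.
Qed.

Lemma tspan_neg_sum c x : tspan c (-1) x ->
  exists s : seq ((int * int) * nat * int),
    x = \sum_(w <- s) ((w.2)%:~R * t ^- (w.1.2).+1 * Emon t X w.1.1).
Proof.
move=> [s [sc ->]]; elim: s sc => [|[[v e] m] s IH] /=.
  by exists [::]; rewrite !big_nil.
move=> /andP[/and3P[_ _ e_neg] /IH[s' s'E]].
case: e e_neg => // n _; exists ((v, n, m) :: s').
by rewrite !big_cons s'E /= -mulrA mulrzl.
Qed.

Lemma mu1E_sub_psi (a b : int) :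
  exists s : seq ((int * int) * nat * int),
    mu1E t X (a, b) - Emon t X (psi (a, b))
    = \sum_(w <- s) ((w.2)%:~R * t ^- (w.1.2).+1 * Emon t X w.1.1).
Proof.
have [c] := leading_mu1E a b.
by rewrite /leading expr0z mul1r; apply: tspan_neg_sum.
Qed.

End ExchangeRelations.

Theorem lemma4p8 (D : unitRingType) (t : D) (X : int -> D) :
  (* D is a division ring (skew field) *)
  (forall x : D, x != 0 -> x \is a GRing.unit) ->
  (* t = q^{1/2} is central and invertible *)
  t \is a GRing.unit -> (forall x : D, t * x = x * t) ->
  (* X_1, X_2 invertible with X_1 X_2 = q X_2 X_1, generating a faithful
     copy of the quantum torus *)
  X 1 \is a GRing.unit -> X 2 \is a GRing.unit ->
  X 1 * X 2 = t ^+ 2 * (X 2 * X 1) ->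
  torus_faithful t (X 1) (X 2) ->
  (* exchange relations defining all X_k *)
  (forall k : int, X (k - 1) * X (k + 1) = exch t k (X k)) ->
  forall a b : int,
    exists s : seq ((int * int) * nat * int),
      mu1E t X (a, b) - Emon t X (psi (a, b))
      = \sum_(w <- s) ((w.2)%:~R * t ^- (w.1.2).+1 * Emon t X w.1.1).
Proof.
move=> _ t_unit t_central X1_unit X2_unit X1X2 _ exchange.
exact: mu1E_sub_psi t_unit t_central X1_unit X2_unit X1X2
  (exchange 1) (exchange 2) (exchange 3).
Qed.
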